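(* Let $m,n\ge 1$ and let $\lambda=n^m$ be the rectangular shape with $m$ rows, each of length $n$. Let $\rho=\{\rho_{i,j}\}_{1\le i\le m,\,1\le j\le n}$ be any density on $\lambda$, and define the rotated density $r(\rho)$ by $r(\rho)_{i,j}=\rho_{m+1-i,\,n+1-j}$. Then $|\mathrm{SVT}(\lambda,\rho)|=|\mathrm{SVT}(\lambda,r(\rho))|$.
   Context: A Young diagram of shape $\lambda=(\lambda_1\ge\lambda_2\ge\dots\ge\lambda_m)$ is a left-justified array of cells with $\lambda_i$ cells in row $i$; cell $(i,j)$ is in row $i$ (numbered from the top) and column $j$ (numbered from the left). A density on $\lambda$ is an assignment of a nonnegative integer $\rho_{i,j}$ to every cell $(i,j)$; let $N=\sum_{i,j}\rho_{i,j}$. A standard set-valued Young tableau of shape $\lambda$ and density $\rho$ is an assignment of a set $S_{i,j}$ with $|S_{i,j}|=\rho_{i,j}$ to each cell, such that the sets $S_{i,j}$ partition $[N]=\{1,\dots,N\}$, and such that every element of $S_{i,j}$ is smaller than every element of $S_{i,j+1}$ and every element of $S_{i+1,j}$ whenever those cells exist (conditions involving an empty set are vacuous). $\mathrm{SVT}(\lambda,\rho)$ denotes the set of all such tableaux. *)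

From mathcomp Require Import all_boot.
Set Implicit Arguments. Unset Strict Implicit. Unset Printing Implicit Defensive.

(* Rectangular shape n^m: cells (i,j) with i : 'I_m (row, 0-based), j : 'I_n
   (column, 0-based).  A density is a function rho : 'I_m -> 'I_n -> nat. *)
Definition density (m n : nat) := 'I_m -> 'I_n -> nat.

Definition dtotal m n (rho : density m n) : nat := \sum_(i < m) \sum_(j < n) rho i j.

(* A standard set-valued tableau is encoded by the map sending each element of
   [N] = {1..N} (represented as 'I_N = {0..N-1}, order preserved) to the cell
   whose set contains it; the set S_{i,j} is the preimage of (i,j).  This is the
   same data as a partition of [N] into sets indexed by the cells. *)
Definition cellset m n N (f : {ffun 'I_N -> 'I_m * 'I_n}) (c : 'I_m * 'I_n)
  : {set 'I_N} := [set k | f k == c].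

Arguments cellset {m n N} f c.

Definition next_cell m n (c d : 'I_m * 'I_n) : bool :=
  ((c.1 == d.1 :> nat) && (d.2 == c.2.+1 :> nat)) ||
  ((c.2 == d.2 :> nat) && (d.1 == c.1.+1 :> nat)).

Definition is_svt m n (rho : density m n) (f : {ffun 'I_(dtotal rho) -> 'I_m * 'I_n})
  : bool :=
  [forall c : 'I_m * 'I_n, #|cellset f c| == rho c.1 c.2] &&
  [forall c : 'I_m * 'I_n, forall d : 'I_m * 'I_n,
     next_cell c d ==>
     [forall k in cellset f c, forall l in cellset f d, (k < l)%N]].

Arguments is_svt {m n} rho f.

Definition SVT m n (rho : density m n) : {set {ffun 'I_(dtotal rho) -> 'I_m * 'I_n}} :=
  [set f | is_svt rho f].

Definition rot_density m n (rho : density m n) : density m n :=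
  fun i j => rho (rev_ord i) (rev_ord j).

From mathcomp Require Import all_boot.
From mathcomp Require Import zify.

(* Rotating a rectangle by 180 degrees reverses the cell order, so reading a
   tableau of density rho with its entries reversed (k |-> N+1-k) and its cells
   rotated gives a tableau of density r(rho): the row and column conditions are
   exchanged with each other's reverses.  This map is injective, and applied to
   r(rho) it lands back in SVT(rho) since r is an involution, so the two sets
   have the same size. *)

Section Rotation.
Variables m n : nat.

Definition rot_cell (c : 'I_m * 'I_n) : 'I_m * 'I_n := (rev_ord c.1, rev_ord c.2).

Lemma rot_cellK : involutive rot_cell.
Proof. by case=> i j; rewrite /rot_cell /= !rev_ordK. Qed.

Lemma rot_cell_inj : injective rot_cell.
Proof. exact: inv_inj rot_cellK. Qed.

Lemma next_cell_rot (c d : 'I_m * 'I_n) :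
  next_cell c d -> next_cell (rot_cell d) (rot_cell c).
Proof.
case: c d => [i j] [i' j']; rewrite /next_cell /rot_cell /=.
have := ltn_ord i; have := ltn_ord j; have := ltn_ord i'; have := ltn_ord j'.
move=> ? ? ? ?.
by case/orP=> /andP[/eqP e1 /eqP e2]; apply/orP; [left|right];
  apply/andP; split; apply/eqP; lia.
Qed.

Variables rho rho' : density m n.
Hypothesis rho'_rot : forall i j, rho' i j = rho (rev_ord i) (rev_ord j).

Lemma dtotal_rot : dtotal rho' = dtotal rho.
Proof.
rewrite /dtotal (reindex_inj rev_ord_inj); apply: eq_bigr => i _.
by rewrite (reindex_inj rev_ord_inj); apply: eq_bigr => j _; rewrite rho'_rot !rev_ordK.
Qed.

Local Notation N := (dtotal rho).
Local Notation N' := (dtotal rho').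

Definition rev_entry (k : 'I_N') : 'I_N := rev_ord (cast_ord dtotal_rot k).

Lemma rev_entry_bij : bijective rev_entry.
Proof.
exists (fun k => cast_ord (esym dtotal_rot) (rev_ord k)) => k.
  by rewrite /rev_entry rev_ordK cast_ordK.
by rewrite /rev_entry cast_ordKV rev_ordK.
Qed.

Lemma ltn_rev_entry (k l : 'I_N') : rev_entry k < rev_entry l -> l < k.
Proof.
rewrite /rev_entry /= -dtotal_rot.
by have := ltn_ord k; have := ltn_ord l; lia.
Qed.

Definition rot_tableau (f : {ffun 'I_N -> 'I_m * 'I_n}) : {ffun 'I_N' -> 'I_m * 'I_n} :=
  [ffun k => rot_cell (f (rev_entry k))].

Lemma rot_tableau_inj : injective rot_tableau.
Proof.
move=> f g /ffunP fg; apply/ffunP => k.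
have [rev_entry_inv _ rev_entryK] := rev_entry_bij.
by rewrite -[k]rev_entryK; apply: rot_cell_inj; have := fg (rev_entry_inv k); rewrite !ffunE.
Qed.

Lemma cellset_rot_tableau f c :
  cellset (rot_tableau f) c = rev_entry @^-1: cellset f (rot_cell c).
Proof.
apply/setP => k; rewrite !inE ffunE.
by apply/eqP/eqP => [<-|->]; rewrite rot_cellK.
Qed.

Lemma rot_tableau_svt f : f \in SVT rho -> rot_tableau f \in SVT rho'.
Proof.
rewrite !inE => /andP[/forallP card_f /forallP lt_f]; apply/andP; split.
  apply/forallP => c; rewrite cellset_rot_tableau rho'_rot.
  rewrite (on_card_preimset (onW_bij _ rev_entry_bij)).
  by have := card_f (rot_cell c).
apply/forallP => c; apply/forallP => d; apply/implyP => cd.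
apply/forallP => k; apply/implyP; rewrite cellset_rot_tableau inE => fk.
apply/forallP => l; apply/implyP; rewrite cellset_rot_tableau inE => fl.
apply: ltn_rev_entry.
have /forallP/(_ (rot_cell c)) := lt_f (rot_cell d).
by rewrite next_cell_rot //= => /forall_inP/(_ _ fl)/forall_inP/(_ _ fk).
Qed.

Lemma card_SVT_rot_leq : #|SVT rho| <= #|SVT rho'|.
Proof.
rewrite -(card_imset (mem (SVT rho)) rot_tableau_inj); apply: subset_leq_card.
by apply/subsetP => _ /imsetP[f f_svt ->]; apply: rot_tableau_svt.
Qed.

End Rotation.

Theorem proposition1 (m n : nat) (hm : 1 <= m) (hn : 1 <= n) (rho : density m n) :
  #|SVT rho| = #|SVT (rot_density rho)|.
Proof.
apply/eqP; rewrite eqn_leq !card_SVT_rot_leq // => i j.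
by rewrite /rot_density !rev_ordK.
Qed.
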